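(* Let $L\subseteq Q$ be a dense extension of symmetric Leibniz algebras, with $L$ semiprime and $\mathrm{ran}(Q)=\mathrm{lan}(Q)=\{0\}$. If $\mathscr{A}(Q)$ is strong right ideally absorbed into $\mathscr{A}_0$, then $\mathscr{A}(Q)$ is a left quotient algebra of $\mathscr{A}_0$.
   Context: A symmetric Leibniz algebra satisfies both $[x,[y,z]]=[[x,y],z]-[[x,z],y]$ and $[x,[y,z]]=[[x,y],z]+[y,[x,z]]$. $L$ semiprime: $[I,I]\ne\{0\}$ for each nonzero ideal $I$ of $L$. $\mathrm{lan}(Q)=\{x:[x,Q]=0\}$, $\mathrm{ran}(Q)=\{x:[Q,x]=0\}$. For $x\in Q$, $R_x(u)=[u,x]$, $L_x(u)=[x,u]$; $M(Q)$ is the associative subalgebra of $\mathrm{End}(Q)$ generated by the identity and all $R_x,L_x$; $L$ is dense in $Q$ if the only $\mu\in M(Q)$ with $\mu(L)=\{0\}$ is $0$. $\mathscr{A}(Q)$ is the associative subalgebra generated by all $R_x,L_x$, $\mathscr{A}_0=\{\mu\in\mathscr{A}(Q):\mu(L)\subseteq L\}$. An associative algebra $S$ is strong right ideally absorbed into a subalgebra $A$ if for any $p,q\in S\setminus\{0\}$ there is a two-sided ideal $I$ of $A$ with $\{a\in A:aI=0\}=\{0\}$ such that $pI\ne\{0\}$ or $qI\ne\{0\}$, and $pI,qI\subseteq A$. $S$ is a left quotient algebra of $A$ if for all $p,q\in S$ with $p\ne0$ there is $x\in A$ with $xp\ne0$ and $xq\in A$. *)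

From HB Require Import structures.
From mathcomp Require Import all_boot all_order all_algebra.
Set Implicit Arguments. Unset Strict Implicit. Unset Printing Implicit Defensive.
Import GRing.Theory.
Local Open Scope ring_scope.

Section Defs.
Variables (F : fieldType) (Q : lmodType F).

Definition bilinear_br (br : Q -> Q -> Q) : Prop :=
  (forall a x y z, br (a *: x + y) z = a *: br x z + br y z) /\
  (forall a x y z, br x (a *: y + z) = a *: br x y + br x z).

Definition symmetric_leibniz (br : Q -> Q -> Q) : Prop :=
  [/\ bilinear_br br,
      (forall x y z, br x (br y z) = br (br x y) z - br (br x z) y) &
      (forall x y z, br x (br y z) = br (br x y) z + br y (br x z))].

Definition subalgebra (br : Q -> Q -> Q) (L : Q -> Prop) : Prop :=
  [/\ L 0, (forall a x y, L x -> L y -> L (a *: x + y)) &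
      (forall x y, L x -> L y -> L (br x y))].

Definition ideal_of (br : Q -> Q -> Q) (L I : Q -> Prop) : Prop :=
  [/\ (forall x, I x -> L x), I 0,
      (forall a x y, I x -> I y -> I (a *: x + y)),
      (forall x y, L x -> I y -> I (br x y)) &
      (forall x y, I x -> L y -> I (br x y))].

Definition semiprime (br : Q -> Q -> Q) (L : Q -> Prop) : Prop :=
  forall I, ideal_of br L I -> (exists x, I x /\ x <> 0) ->
    exists x y, [/\ I x, I y & br x y <> 0].

Definition lan_trivial (br : Q -> Q -> Q) : Prop :=
  forall x, (forall y, br x y = 0) -> x = 0.
Definition ran_trivial (br : Q -> Q -> Q) : Prop :=
  forall x, (forall y, br y x = 0) -> x = 0.

(* The associative subalgebra of End(Q) (product = composition) generated
   by all R_x, L_x, and also by the identity when withId = true.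
   M(Q) = gen_alg br true, A(Q) = gen_alg br false. *)
Inductive gen_alg (br : Q -> Q -> Q) (withId : bool) : (Q -> Q) -> Prop :=
| ga_R x : gen_alg br withId (fun u => br u x)
| ga_L x : gen_alg br withId (fun u => br x u)
| ga_id : withId -> gen_alg br withId (fun u => u)
| ga_zero : gen_alg br withId (fun _ => 0)
| ga_add f g : gen_alg br withId f -> gen_alg br withId g ->
               gen_alg br withId (fun u => f u + g u)
| ga_scale a f : gen_alg br withId f -> gen_alg br withId (fun u => a *: f u)
| ga_comp f g : gen_alg br withId f -> gen_alg br withId g ->
               gen_alg br withId (fun u => f (g u)).

Definition MQ br := gen_alg br true.
Definition AQ br := gen_alg br false.

Definition A0 br (L : Q -> Prop) (mu : Q -> Q) : Prop :=
  AQ br mu /\ forall x, L x -> L (mu x).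

Definition dense br (L : Q -> Prop) : Prop :=
  forall mu, MQ br mu -> (forall x, L x -> mu x = 0) -> forall u, mu u = 0.

Definition nonzero_end (f : Q -> Q) : Prop := exists u, f u <> 0.

Definition assoc_ideal (A I : (Q -> Q) -> Prop) : Prop :=
  [/\ (forall i, I i -> A i), I (fun _ => 0),
      (forall a i j, I i -> I j -> I (fun u => a *: i u + j u)),
      (forall a i, A a -> I i -> I (fun u => a (i u))) &
      (forall a i, A a -> I i -> I (fun u => i (a u)))].

Definition lann_trivial (A I : (Q -> Q) -> Prop) : Prop :=
  forall a, A a -> (forall i, I i -> forall u, a (i u) = 0) -> forall u, a u = 0.

Definition mul_ideal_nonzero (p : Q -> Q) (I : (Q -> Q) -> Prop) : Prop :=
  exists i, I i /\ nonzero_end (fun u => p (i u)).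

Definition strong_right_ideally_absorbed (S A : (Q -> Q) -> Prop) : Prop :=
  forall p q, S p -> S q -> nonzero_end p -> nonzero_end q ->
    exists I, [/\ assoc_ideal A I, lann_trivial A I,
      mul_ideal_nonzero p I \/ mul_ideal_nonzero q I,
      (forall i, I i -> A (fun u => p (i u))) &
      (forall i, I i -> A (fun u => q (i u)))].

Definition left_quotient_algebra (S A : (Q -> Q) -> Prop) : Prop :=
  forall p q, S p -> S q -> nonzero_end p ->
    exists x, [/\ A x, nonzero_end (fun u => x (p u)) & A (fun u => x (q u))].

End Defs.

From mathcomp Require Import all_boot all_order all_algebra.
From Stdlib Require Import Classical.

(* Given p <> 0, pick v = p u0 <> 0; absorbing R_v gives an ideal I' of A_0 with
   zero left annihilator and i0 in I' with 0 <> R_v i0 in A_0.  For any such ideal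
   I, the subspaces C_n = span (I^n A_0)(L) form a decreasing filtration with
   C_0 <= L, and an h with h I <= A_0 maps C_(n+1) into C_n.  Call g a
   multiplier of depth e if, whenever [C_(n+d), g2 L] <= C_n for all n, also
   [C_(n+d+e), g g2 L] <= C_n.  The Leibniz identities together with absorption
   of R_y and L_y make the generators of A(Q) multipliers, multipliers are closed
   under the algebra operations (after intersecting the ideals), and the identity
   has depth 0, so [C_e, q L] <= C_0 <= L for some e.  Density and the zero annihilator forbid
   R_v to vanish on I^e A_0 L, so some a in C_e has [a, v] <> 0, and x = L_a
   satisfies x p <> 0 and x q in A_0. *)

Set Implicit Arguments. Unset Strict Implicit. Unset Printing Implicit Defensive.
Import GRing.Theory.
Local Open Scope ring_scope.

Section Span.
Variables (F : fieldType) (Q : lmodType F).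

Lemma linear_map0 (f : Q -> Q) : linear f -> f 0 = 0.
Proof.
by move=> /GRing.zmod_morphism_linear fB; have := fB 0 0; rewrite subrr => ->; rewrite subrr.
Qed.

Lemma linear_mapD (f : Q -> Q) x y : linear f -> f (x + y) = f x + f y.
Proof. by move=> /GRing.semilinear_linear [_ fD]; apply: fD. Qed.

Lemma linear_mapZ (f : Q -> Q) (c : F) x : linear f -> f (c *: x) = c *: f x.
Proof. by move=> /GRing.scalable_linear fZ; apply: fZ. Qed.

Inductive span (S : Q -> Prop) : Q -> Prop :=
| span_gen x : S x -> span S x
| span0 : span S 0
| span_lin a x y : span S x -> span S y -> span S (a *: x + y).

Lemma span_linear_image (S T : Q -> Prop) (h : Q -> Q) x :
  linear h -> (forall y, S y -> span T (h y)) -> span S x -> span T (h x).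
Proof.
move=> h_lin hST; elim=> [y /hST //||a y z _ IHy _ IHz].
  by rewrite linear_map0 //; apply: span0.
by rewrite h_lin; apply: span_lin.
Qed.

Lemma span_mono (S T : Q -> Prop) x :
  (forall y, S y -> T y) -> span S x -> span T x.
Proof.
move=> ST; apply: (span_linear_image (h := id)) => [a y z //|y /ST].
exact: span_gen.
Qed.

Lemma span_least (S P : Q -> Prop) x :
  P 0 -> (forall a y z, P y -> P z -> P (a *: y + z)) ->
  (forall y, S y -> P y) -> span S x -> P x.
Proof. by move=> P0 P_lin SP; elim=> [y /SP||a y z _ Py _ Pz]; last exact: P_lin. Qed.

Lemma spanD (S : Q -> Prop) x y : span S x -> span S y -> span S (x + y).
Proof. by move=> Sx Sy; have := span_lin 1 Sx Sy; rewrite scale1r. Qed.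

Lemma spanZ (S : Q -> Prop) (c : F) x : span S x -> span S (c *: x).
Proof. by move=> Sx; rewrite -[c *: x]addr0; apply: span_lin => //; apply: span0. Qed.

Lemma spanB (S : Q -> Prop) x y : span S x -> span S y -> span S (x - y).
Proof. by move=> Sx Sy; rewrite addrC -scaleN1r; apply: span_lin. Qed.

End Span.

Section Multiplications.
Variables (F : fieldType) (Q : lmodType F) (br : Q -> Q -> Q) (L : Q -> Prop).
Hypothesis br_bilinear : bilinear_br br.

Lemma linear_bracketl z : linear (br^~ z).
Proof. by move=> a x y; case: br_bilinear. Qed.

Lemma linear_bracketr z : linear (br z).
Proof. by move=> a x y; case: br_bilinear. Qed.

Lemma bracket0l x : br 0 x = 0.
Proof. exact: (linear_map0 (linear_bracketl x)). Qed.

Lemma bracket0r x : br x 0 = 0.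
Proof. exact: (linear_map0 (linear_bracketr x)). Qed.

Lemma AQ_linear f : AQ br f -> linear f.
Proof.
elim=> [z|z|//||f1 f2 _ IH1 _ IH2|c f1 _ IH1|f1 f2 _ IH1 _ IH2] a x y /=.
- exact: linear_bracketl.
- exact: linear_bracketr.
- by rewrite scaler0 addr0.
- by rewrite IH1 IH2 scalerDr addrACA.
- by rewrite IH1 scalerDr !scalerA mulrC.
- by rewrite IH2 IH1.
Qed.

Lemma AQ_MQ f : AQ br f -> MQ br f.
Proof. by elim=> *; constructor. Qed.

Lemma A0_comp f g : A0 br L f -> A0 br L g -> A0 br L (fun u => f (g u)).
Proof. by case=> Af Lf [Ag Lg]; split=> [|x /Lg /Lf //]; apply: ga_comp. Qed.

Lemma A0_bracketl z : subalgebra br L -> L z -> A0 br L (br^~ z).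
Proof. by case=> _ _ L_br Lz; split=> [|x Lx]; [apply: ga_R | apply: L_br]. Qed.

Lemma A0_bracketr z : subalgebra br L -> L z -> A0 br L (br z).
Proof. by case=> _ _ L_br Lz; split=> [|x Lx]; [apply: ga_L | apply: L_br]. Qed.

Lemma bracketl_nonzero y : ran_trivial br -> y <> 0 -> nonzero_end (br^~ y).
Proof. by move=> ran0 y0; apply: not_all_ex_not => y_ann; apply/y0/ran0. Qed.

Lemma bracketr_nonzero y : lan_trivial br -> y <> 0 -> nonzero_end (br y).
Proof. by move=> lan0 y0; apply: not_all_ex_not => y_ann; apply/y0/lan0. Qed.

Definition faithful_ideal (I : (Q -> Q) -> Prop) :=
  assoc_ideal (A0 br L) I /\ lann_trivial (A0 br L) I.

Lemma faithful_ideal_A0 I i : faithful_ideal I -> I i -> A0 br L i.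
Proof. by case=> -[I_A0 _ _ _ _] _; apply: I_A0. Qed.

Lemma faithful_idealI I J :
  faithful_ideal I -> faithful_ideal J -> faithful_ideal (fun i => I i /\ J i).
Proof.
move=> [[I_A0 I0 I_lin I_compl I_compr] I_lann].
move=> [[J_A0 J0 J_lin J_compl J_compr] J_lann]; split.
  split=> [i [/I_A0 //]|//|a i j [Ii Ji] [Ij Jj]|a i Aa [Ii Ji]|a i Aa [Ii Ji]].
  - by split; [apply: I_lin | apply: J_lin].
  - by split; [apply: I_compl | apply: J_compl].
  - by split; [apply: I_compr | apply: J_compr].
move=> a Aa aIJ0; apply: J_lann => // j Jj.
have Aaj : A0 br L (fun u => a (j u)) by apply: A0_comp => //; apply: J_A0.
apply: (I_lann _ Aaj) => i Ii.
apply: (aIJ0 (fun u => j (i u))).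
by split; [apply: I_compl => //; apply: J_A0 | apply: J_compr => //; apply: I_A0].
Qed.

Fixpoint pow_ideal (I : (Q -> Q) -> Prop) (n : nat) (f : Q -> Q) : Prop :=
  if n is m.+1 then exists i g, [/\ I i, pow_ideal I m g & f = (fun u => i (g u))]
  else A0 br L f.

Section PowersOfIdeal.
Variable I : (Q -> Q) -> Prop.
Hypothesis I_faithful : faithful_ideal I.

Let I_A0 i : I i -> A0 br L i := faithful_ideal_A0 I_faithful (i := i).

Lemma pow_ideal_A0 n f : pow_ideal I n f -> A0 br L f.
Proof.
elim: n f => [//|n IH] f /= [i [g [Ii Ig ->]]].
by apply: A0_comp; [apply: I_A0 | apply: IH].
Qed.

Lemma pow_idealMl n a f :
  A0 br L a -> pow_ideal I n f -> pow_ideal I n (fun u => a (f u)).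
Proof.
case: n => [|n] Aa /=; first exact: A0_comp.
case=> i [g [Ii Ig ->]]; exists (fun u => a (i u)), g; split=> //.
by case: I_faithful => -[_ _ _ I_compl _] _; apply: I_compl.
Qed.

Lemma pow_idealS n f : pow_ideal I n.+1 f -> pow_ideal I n f.
Proof. by case=> i [g [Ii Ig ->]]; apply: pow_idealMl => //; apply: I_A0. Qed.

Lemma pow_ideal_lann n b :
  A0 br L b -> (forall f u, pow_ideal I n f -> b (f u) = 0) -> forall u, b u = 0.
Proof.
case: I_faithful => _ I_lann.
elim: n b => [|n IH] b Ab bI0; apply: (I_lann _ Ab) => i Ii.
  by move=> u; apply: bI0; apply: I_A0.
apply: IH => [|g u Ig]; first by apply: A0_comp => //; apply: I_A0.
by apply: (bI0 (fun u => i (g u))); exists i, g.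
Qed.

Definition filtration n :=
  span (fun x => exists f w, [/\ pow_ideal I n f, L w & x = f w]).

Lemma filtration_gen n f w : pow_ideal I n f -> L w -> filtration n (f w).
Proof. by move=> If Lw; apply: span_gen; exists f, w. Qed.

Lemma filtration_A0 n a x : A0 br L a -> filtration n x -> filtration n (a x).
Proof.
move=> Aa; apply: span_linear_image; first by apply: AQ_linear; case: Aa.
move=> _ [f [w [If Lw ->]]].
by apply: (filtration_gen (f := fun u => a (f u))) => //; apply: pow_idealMl.
Qed.

Lemma filtration_lower n h x :
  linear h -> (forall i, I i -> A0 br L (fun u => h (i u))) ->
  filtration n.+1 x -> filtration n (h x).
Proof.
move=> h_lin hI; apply: span_linear_image => // _ [_ [w [[i [g [Ii Ig ->]]] Lw ->]]].
apply: (filtration_gen (f := fun u => h (i (g u)))) => //.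
exact: (pow_idealMl (hI i Ii) Ig).
Qed.

Lemma filtration_mono m n x : (m <= n)%N -> filtration n x -> filtration m x.
Proof.
move=> /subnK <-; elim: (n - m)%N x => [//|k IH] x Fx; apply: IH.
by apply: span_mono Fx => _ [f [w [If Lw ->]]]; exists f, w; split=> //; apply: pow_idealS.
Qed.

Lemma filtration0_L x : subalgebra br L -> filtration 0 x -> L x.
Proof. by case=> L0 L_lin _; apply: span_least => // _ [f [w [[_ Lf] Lw ->]]]; apply: Lf. Qed.

Definition shifts (g : Q -> Q) (d : nat) :=
  forall n a u, filtration (n + d) a -> L u -> filtration n (br a (g u)).

Lemma shifts_mono g d d' : (d <= d')%N -> shifts g d -> shifts g d'.
Proof.
move=> le_dd' g_d n a u Fa Lu; apply: g_d Lu.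
by apply: filtration_mono Fa; rewrite leq_add2l.
Qed.

Lemma shifts_id : subalgebra br L -> shifts id 0.
Proof.
move=> L_sub n a u; rewrite addn0 => Fa Lu.
by apply: (filtration_A0 (a := br^~ u)) Fa; apply: A0_bracketl.
Qed.

Lemma pow_ideal_witness n h i0 :
  dense br L -> AQ br h -> A0 br L i0 -> A0 br L (fun u => h (i0 u)) ->
  nonzero_end (fun u => h (i0 u)) ->
  exists f w, [/\ pow_ideal I n f, L w & h (f w) <> 0].
Proof.
move=> L_dense Ah Ai0 Ahi0 [u0 hi0u0]; apply: NNPP => no_witness; apply: hi0u0.
have h_pow0 f : pow_ideal I n f -> forall u, h (f u) = 0.
  move=> If; apply: (L_dense (fun u => h (f u))).
    by apply: AQ_MQ; apply: ga_comp => //; case: (pow_ideal_A0 If).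
  by move=> w Lw; apply: NNPP => hfw; apply: no_witness; exists f, w.
apply: (pow_ideal_lann (n := n) Ahi0) => f u If.
exact: (h_pow0 (fun u => i0 (f u))) (pow_idealMl Ai0 If) u.
Qed.

Lemma shifts_A0 q e f w :
  subalgebra br L -> AQ br q -> shifts q e -> pow_ideal I e f -> L w ->
  A0 br L (fun u => br (f w) (q u)).
Proof.
move=> L_sub Aq q_e If Lw; split; first by apply: ga_comp => //; apply: ga_L.
by move=> u Lu; apply: filtration0_L => //; apply: q_e => //; apply: filtration_gen.
Qed.

End PowersOfIdeal.

End Multiplications.

Section Multipliers.
Variables (F : fieldType) (Q : lmodType F) (br : Q -> Q -> Q) (L : Q -> Prop).
Hypothesis br_leibniz : symmetric_leibniz br.

Let br_bilinear : bilinear_br br. Proof. by case: br_leibniz. Qed.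

Definition multiplier (I0 : (Q -> Q) -> Prop) (g : Q -> Q) (e : nat) :=
  forall I, faithful_ideal br L I -> (forall i, I i -> I0 i) ->
  forall g2 d, shifts br L I g2 d -> shifts br L I (fun u => g (g2 u)) (d + e).

Lemma multiplier_mono I0 g e e' :
  (e <= e')%N -> multiplier I0 g e -> multiplier I0 g e'.
Proof.
move=> le_ee' g_e I I_faithful II0 g2 d g2_d.
by apply: (shifts_mono I_faithful _ (g_e I I_faithful II0 g2 d g2_d)); rewrite leq_add2l.
Qed.

Lemma multiplier0 I0 : multiplier I0 (fun _ => 0) 0.
Proof.
by move=> I _ _ g2 d _ n a u _ _ /=; rewrite bracket0r //; apply: span0.
Qed.

Lemma multiplierD I0 J g h e e' :
  multiplier I0 g e -> multiplier J h e' ->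
  multiplier (fun i => I0 i /\ J i) (fun u => g u + h u) (e + e').
Proof.
move=> g_e h_e' I I_faithful IJ g2 d g2_d n a u Fa Lu.
rewrite linear_mapD; last exact: linear_bracketr.
apply: spanD.
- apply: (multiplier_mono (leq_addr e' e) g_e I_faithful _ g2_d Fa Lu).
  by move=> i /IJ [].
- apply: (multiplier_mono (leq_addl e e') h_e' I_faithful _ g2_d Fa Lu).
  by move=> i /IJ [].
Qed.

Lemma multiplierZ I0 g e c : multiplier I0 g e -> multiplier I0 (fun u => c *: g u) e.
Proof.
move=> g_e I I_faithful II0 g2 d g2_d n a u Fa Lu.
rewrite linear_mapZ; last exact: linear_bracketr.
exact/spanZ/(g_e I I_faithful II0 g2 d g2_d).
Qed.

Lemma multiplier_comp I0 J g h e e' :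
  multiplier I0 g e -> multiplier J h e' ->
  multiplier (fun i => I0 i /\ J i) (fun u => g (h u)) (e' + e).
Proof.
move=> g_e h_e' I I_faithful IJ g2 d g2_d; rewrite addnA.
apply: g_e => [//|i /IJ []//|].
by apply: h_e' => // i /IJ [].
Qed.

(* By the Leibniz identities, each term of [a, [g2 u, y]] and [a, [y, g2 u]] is
   a shift by g2 preceded or followed by R_y or L_y, which lower the filtration
   by one step because R_y I0 and L_y I0 lie in A_0. *)
Lemma multiplier_bracketl I0 y :
  (forall i, I0 i -> A0 br L (fun u => br (i u) y)) -> multiplier I0 (br^~ y) 1.
Proof.
move=> yI0 I I_faithful II0 g2 d g2_d n a u Fa Lu /=.
have Fa' : filtration br L I (n + d).+1 a by rewrite -addn1 -addnA.
have lower_y m x : filtration br L I m.+1 x -> filtration br L I m (br x y).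
  by apply: (filtration_lower I_faithful (linear_bracketl br_bilinear y)) => i /II0 /yI0.
case: br_leibniz => _ -> _; apply: spanB; last exact: g2_d (lower_y _ _ Fa') Lu.
by apply: lower_y; apply: g2_d Lu.
Qed.

Lemma multiplier_bracketr I0 y :
  (forall i, I0 i -> A0 br L (fun u => br (i u) y)) ->
  (forall i, I0 i -> A0 br L (fun u => br y (i u))) -> multiplier I0 (br y) 1.
Proof.
move=> yI0 I0y I I_faithful II0 g2 d g2_d n a u Fa Lu /=.
have Fa' : filtration br L I (n + d).+1 a by rewrite -addn1 -addnA.
have lower_yl m x : filtration br L I m.+1 x -> filtration br L I m (br x y).
  by apply: (filtration_lower I_faithful (linear_bracketl br_bilinear y)) => i /II0 /yI0.
have lower_yr m x : filtration br L I m.+1 x -> filtration br L I m (br y x).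
  by apply: (filtration_lower I_faithful (linear_bracketr br_bilinear y)) => i /II0 /I0y.
case: br_leibniz => _ _ ->; apply: spanD; first exact: g2_d (lower_yl _ _ Fa') Lu.
by apply: lower_yr; apply: g2_d Lu.
Qed.

End Multipliers.

Section Absorbed.
Variables (F : fieldType) (Q : lmodType F) (br : Q -> Q -> Q) (L : Q -> Prop).
Hypotheses (br_leibniz : symmetric_leibniz br) (L_sub : subalgebra br L).
Hypotheses (ran0 : ran_trivial br) (lan0 : lan_trivial br).
Hypothesis absorbed : strong_right_ideally_absorbed (AQ br) (A0 br L).

Let br_bilinear : bilinear_br br. Proof. by case: br_leibniz. Qed.

(* For [y = 0] any faithful ideal will do, hence the base ideal [Ib]. *)
Lemma absorbing_ideal Ib y : faithful_ideal br L Ib ->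
  exists2 I0, faithful_ideal br L I0 &
    forall i, I0 i -> A0 br L (fun u => br (i u) y) /\ A0 br L (fun u => br y (i u)).
Proof.
move=> Ib_faithful; have [->|y0] := classic (y = 0).
  exists Ib => // i /(faithful_ideal_A0 Ib_faithful) [Ai _].
  case: L_sub => L0 _ _; (split; split)=> [|x _||x _].
  - exact: (ga_comp (ga_R br false 0) Ai).
  - by rewrite (bracket0r br_bilinear).
  - exact: (ga_comp (ga_L br false 0) Ai).
  - by rewrite (bracket0l br_bilinear).
have [I0 [I0_ideal I0_lann _ yI0 I0y]] := absorbed (ga_R br false y) (ga_L br false y)
  (bracketl_nonzero ran0 y0) (bracketr_nonzero lan0 y0).
by exists I0 => // i Ii; split; [apply: yI0 | apply: I0y].
Qed.

Lemma AQ_multiplier Ib g : faithful_ideal br L Ib -> AQ br g ->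
  exists2 I0, faithful_ideal br L I0 & exists e, multiplier br L I0 g e.
Proof.
move=> Ib_faithful; elim=> [y|y|//||f h _ [If If_f [ef f_e]] _ [Ih Ih_f [eh h_e]]
  |c f _ [If If_f [ef f_e]]|f h _ [If If_f [ef f_e]] _ [Ih Ih_f [eh h_e]]].
- have [I0 I0_faithful yI0] := absorbing_ideal y Ib_faithful.
  by exists I0 => //; exists 1%N; apply: multiplier_bracketl => // i /yI0 [].
- have [I0 I0_faithful yI0] := absorbing_ideal y Ib_faithful.
  by exists I0 => //; exists 1%N; apply: multiplier_bracketr => // i /yI0 [].
- by exists Ib => //; exists 0%N; apply: multiplier0.
- exists (fun i => If i /\ Ih i); first exact: faithful_idealI.
  by exists (ef + eh)%N; apply: multiplierD.
- by exists If => //; exists ef; apply: multiplierZ.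
- exists (fun i => If i /\ Ih i); first exact: faithful_idealI.
  by exists (eh + ef)%N; apply: multiplier_comp.
Qed.

End Absorbed.

Theorem corollary6p10 (F : fieldType) (Q : lmodType F)
    (br : Q -> Q -> Q) (L : Q -> Prop) :
  symmetric_leibniz br ->
  subalgebra br L ->
  dense br L ->
  semiprime br L ->
  ran_trivial br -> lan_trivial br ->
  strong_right_ideally_absorbed (AQ br) (A0 br L) ->
  left_quotient_algebra (AQ br) (A0 br L).
Proof.
move=> br_leibniz L_sub L_dense _ ran0 lan0 absorbed p q Ap Aq [u0 pu0].
have br_bilinear : bilinear_br br by case: br_leibniz.
set v := p u0.
have Rv_nonzero := bracketl_nonzero ran0 pu0.
have [I' [I'_ideal I'_lann Rv_I' Rv_I'_A0 _]] :=
  absorbed _ _ (ga_R br false v) (ga_R br false v) Rv_nonzero Rv_nonzero.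
have I'_faithful : faithful_ideal br L I' by [].
have [i0 [I'i0 Rv_i0]] : mul_ideal_nonzero (br^~ v) I' by case: Rv_I'.
have [I I_faithful [e q_e]] := AQ_multiplier br_leibniz L_sub ran0 lan0 absorbed I'_faithful Aq.
have q_shifts : shifts br L I q e :=
  q_e I I_faithful (fun i Ii => Ii) id 0 (shifts_id br_bilinear I_faithful L_sub).
have [f [w [If Lw fw_v]]] := pow_ideal_witness I_faithful e L_dense (ga_R br false v)
  (faithful_ideal_A0 I'_faithful I'i0) (Rv_I'_A0 i0 I'i0) Rv_i0.
exists (br (f w)); split.
- by apply: A0_bracketr => //; case: (pow_ideal_A0 I_faithful If) => _; apply.
- by exists u0.
- exact: (shifts_A0 L_sub Aq q_shifts If Lw).
Qed.
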